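(* Let $n\ge 2$, $p\ge 1$, and let ${\bf x}=(x_1,\dots,x_n)\in\mathbb{R}^n$. Let $m$ be the median location, i.e. $m=x_{[k]}$ where $k=\lceil n/2\rceil$ (so $n=2k-1$ or $n=2k$) and $x_{[k]}$ denotes the $k$-th largest component of ${\bf x}$. Then $$\Big(\sum_{i=1}^n|m-x_i|^p\Big)^{1/p}\;\le\;2^{1-\frac1p}\,\min_{y\in\mathbb{R}}\Big(\sum_{i=1}^n|y-x_i|^p\Big)^{1/p}.$$
   Context: The social cost of locating a facility at $y\in\mathbb{R}$ for a location profile ${\bf x}=(x_1,\dots,x_n)$ is $sc({\bf x},y)=\big(\sum_{i=1}^n|x_i-y|^p\big)^{1/p}$. The median mechanism maps ${\bf x}$ to $m$ as defined in the claim. *)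

From Stdlib Require Import Reals Lra Lia.
Open Scope R_scope.

(* Real power a^q for a >= 0 with the convention 0^q = 0 (q > 0);
   Stdlib's Rpower 0 q is 1, so we fix the zero case explicitly. *)
Definition rpow (a q : R) : R := if Req_EM_T a 0 then 0 else Rpower a q.

Fixpoint count_idx (P : R -> bool) (x : nat -> R) (n : nat) : nat :=
  match n with
  | O => O
  | S n' => (count_idx P x n' + (if P (x n') then 1 else 0))%nat
  end.

Definition Rgtb (a b : R) : bool := if Rlt_dec b a then true else false.
Definition Rgeb (a b : R) : bool := if Rle_dec b a then true else false.

(* m is the k-th largest component x_[k] of (x_0,...,x_{n-1}):
   m is a component, fewer than k components exceed m, and at least k
   components are >= m.  (This determines m uniquely.) *)
Definition kth_largest (x : nat -> R) (n k : nat) (m : R) : Prop :=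
  (exists j, (j < n)%nat /\ x j = m) /\
  (count_idx (fun v => Rgtb v m) x n < k)%nat /\
  (k <= count_idx (fun v => Rgeb v m) x n)%nat.

Definition sc (p : R) (x : nat -> R) (n : nat) (y : R) : R :=
  rpow (sum_f_R0 (fun i => rpow (Rabs (x i - y)) p) (n - 1)) (1 / p).

From Stdlib Require Import Reals Lra Lia.
Open Scope R_scope.

(* Put K = 2^(p-1) and d = |y - m|.  For every agent i,
   c_i := |x_i - m|^p - K |x_i - y|^p satisfies
   - c_i <= K d^p always (triangle inequality and the power-mean bound
     (s + t)^p <= 2^(p-1) (s^p + t^p)), and
   - c_i <= - K d^p when m lies between x_i and y (then |x_i - y| =
     |x_i - m| + d, and t^p + d^p <= (t + d)^p by superadditivity).
   Because m is the median, at most half of the agents lie strictly on the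
   side of m facing y, so the c_i sum to at most 0, i.e.
   sum |x_i - m|^p <= 2^(p-1) sum |x_i - y|^p; taking p-th roots gives the
   theorem. *)

Lemma rpow_nonneg a q : 0 <= rpow a q.
Proof.
  unfold rpow; destruct (Req_EM_T a 0); [lra | left; apply exp_pos].
Qed.

Lemma rpow_pos a q : 0 < a -> rpow a q = Rpower a q.
Proof. intros; unfold rpow; destruct (Req_EM_T a 0); [lra | reflexivity]. Qed.

Lemma rpow_0 q : rpow 0 q = 0.
Proof. unfold rpow; destruct (Req_EM_T 0 0); [reflexivity | lra]. Qed.

Lemma rpow_le_compat a b q : 0 <= q -> 0 <= a <= b -> rpow a q <= rpow b q.
Proof.
  intros Hq [Ha Hab]. destruct (Req_dec a 0) as [-> | Ha0].
  - rewrite rpow_0; apply rpow_nonneg.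
  - rewrite !rpow_pos by lra. apply Rle_Rpower_l; lra.
Qed.

Lemma rpow_mult a b q : 0 <= a -> 0 <= b -> rpow (a * b) q = rpow a q * rpow b q.
Proof.
  intros Ha Hb. destruct (Req_dec a 0) as [-> | Ha0].
  { rewrite Rmult_0_l, !rpow_0; ring. }
  destruct (Req_dec b 0) as [-> | Hb0].
  { rewrite Rmult_0_r, !rpow_0; ring. }
  rewrite !rpow_pos by (try apply Rmult_lt_0_compat; lra).
  now rewrite Rpower_mult_distr by lra.
Qed.

Lemma Rpower_peel r p : 0 < r -> Rpower r p = r * Rpower r (p - 1).
Proof.
  intros Hr. replace p with (1 + (p - 1)) at 1 by ring.
  now rewrite Rpower_plus, Rpower_1.
Qed.

Lemma Rpower_2_ge_1 p : 1 <= p -> 1 <= Rpower 2 (p - 1).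
Proof.
  intros Hp. pose proof (Rle_Rpower 2 0 (p - 1) ltac:(lra) ltac:(lra)) as H.
  now rewrite Rpower_O in H by lra.
Qed.

Lemma Rdiv_nonneg a b : 0 <= a -> 0 < b -> 0 <= a / b.
Proof.
  intros; unfold Rdiv; apply Rmult_le_pos; [lra | left; apply Rinv_0_lt_compat; lra].
Qed.

Lemma share_bounds s S : 0 <= s <= S -> 0 < S -> 0 <= s / S <= 1.
Proof.
  intros Hs HS. split; [apply Rdiv_nonneg; lra |].
  apply Rmult_le_reg_r with S; [lra |].
  replace (s / S * S) with s by (field; lra). lra.
Qed.

(* Bernoulli's inequality r^p >= 1 + p (r - 1), from exp u >= 1 + u. *)
Lemma bernoulli r p : 1 <= p -> 0 <= r -> 1 + p * (r - 1) <= rpow r p.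
Proof.
  intros Hp Hr. destruct (Req_dec r 0) as [-> | Hr0].
  { rewrite rpow_0; nra. }
  rewrite rpow_pos, Rpower_peel by lra.
  assert (Hln : 1 - / r <= ln r).
  { pose proof (exp_ineq1_le (ln (/ r))) as H.
    rewrite exp_ln in H by (apply Rinv_0_lt_compat; lra).
    rewrite ln_Rinv in H by lra. lra. }
  assert (Hexp : 1 + (p - 1) * ln r <= Rpower r (p - 1)) by apply exp_ineq1_le.
  assert (Hlin : (p - 1) * (1 - / r) <= (p - 1) * ln r)
    by (apply Rmult_le_compat_l; lra).
  assert (H : r * (1 + (p - 1) * (1 - / r)) <= r * Rpower r (p - 1))
    by (apply Rmult_le_compat_l; lra).
  replace (r * (1 + (p - 1) * (1 - / r))) with (1 + p * (r - 1)) in H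
    by (field; lra).
  exact H.
Qed.

Lemma Rpower_base_1 q : Rpower 1 q = 1.
Proof. unfold Rpower; now rewrite ln_1, Rmult_0_r, exp_0. Qed.

Lemma rpow_le_self r p : 1 <= p -> 0 <= r <= 1 -> rpow r p <= r.
Proof.
  intros Hp Hr. destruct (Req_dec r 0) as [-> | Hr0].
  { rewrite rpow_0; lra. }
  rewrite rpow_pos, Rpower_peel by lra.
  assert (H : Rpower r (p - 1) <= Rpower 1 (p - 1)) by (apply Rle_Rpower_l; lra).
  rewrite Rpower_base_1 in H. nra.
Qed.

(* Superadditivity: s^p + t^p <= (s + t)^p; apply [rpow_le_self] to the
   shares s/(s+t) and t/(s+t). *)
Lemma rpow_superadditive s t p : 1 <= p -> 0 <= s -> 0 <= t ->
  rpow s p + rpow t p <= rpow (s + t) p.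
Proof.
  intros Hp Hs Ht. destruct (Req_dec (s + t) 0) as [H0 | H0].
  { replace s with 0 by lra; replace t with 0 by lra.
    rewrite Rplus_0_r, !rpow_0; lra. }
  set (S := s + t).
  assert (HS : 0 < S) by (unfold S; lra).
  assert (Hshare_s : 0 <= s / S <= 1) by (apply share_bounds; unfold S; lra).
  assert (Hshare_t : 0 <= t / S <= 1) by (apply share_bounds; unfold S; lra).
  replace s with (S * (s / S)) at 1 by (field; lra).
  replace t with (S * (t / S)) at 1 by (field; lra).
  rewrite !rpow_mult by lra.
  pose proof (rpow_le_self (s / S) p Hp Hshare_s).
  pose proof (rpow_le_self (t / S) p Hp Hshare_t).
  assert (Hsum : s / S + t / S = 1) by (unfold S; field; lra).
  pose proof (rpow_nonneg S p). nra.
Qed.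

(* Power-mean bound: (s + t)^p <= 2^(p-1) (s^p + t^p); apply Bernoulli's
   inequality around the midpoint (s + t)/2. *)
Lemma rpow_sum_le_power_mean s t p : 1 <= p -> 0 <= s -> 0 <= t ->
  rpow (s + t) p <= Rpower 2 (p - 1) * (rpow s p + rpow t p).
Proof.
  intros Hp Hs Ht. destruct (Req_dec (s + t) 0) as [H0 | H0].
  { replace s with 0 by lra; replace t with 0 by lra.
    rewrite Rplus_0_r, !rpow_0; lra. }
  set (M := (s + t) / 2).
  assert (HM : 0 < M) by (unfold M; lra).
  assert (Hmid : 2 * rpow M p <= rpow s p + rpow t p).
  { replace s with (M * (s / M)) by (field; lra).
    replace t with (M * (t / M)) by (field; lra).
    rewrite !rpow_mult by (try apply Rdiv_nonneg; lra).
    pose proof (bernoulli (s / M) p Hp ltac:(apply Rdiv_nonneg; lra)).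
    pose proof (bernoulli (t / M) p Hp ltac:(apply Rdiv_nonneg; lra)).
    assert (Hsum : s / M + t / M = 2) by (unfold M; field; lra).
    assert (Hcancel : p * (s / M - 1) + p * (t / M - 1) = 0).
    { replace (p * (s / M - 1) + p * (t / M - 1)) with (p * (s / M + t / M - 2))
        by ring. rewrite Hsum; ring. }
    assert (Hshares : 2 <= rpow (s / M) p + rpow (t / M) p) by lra.
    rewrite <- Rmult_plus_distr_l, (Rmult_comm 2).
    apply Rmult_le_compat_l; [apply rpow_nonneg | exact Hshares]. }
  replace (s + t) with (2 * M) by (unfold M; field).
  rewrite rpow_mult, (rpow_pos 2), Rpower_peel by lra.
  pose proof (Rpower_2_ge_1 p Hp). nra.
Qed.

Lemma cost_gap_le a b d p : 1 <= p -> 0 <= a -> 0 <= b -> 0 <= d -> a <= b + d ->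
  rpow a p - Rpower 2 (p - 1) * rpow b p <= Rpower 2 (p - 1) * rpow d p.
Proof.
  intros Hp Ha Hb Hd Habd.
  pose proof (rpow_le_compat a (b + d) p ltac:(lra) ltac:(lra)).
  pose proof (rpow_sum_le_power_mean b d p Hp Hb Hd). lra.
Qed.

Lemma cost_gap_le_opp a d p : 1 <= p -> 0 <= a -> 0 <= d ->
  rpow a p - Rpower 2 (p - 1) * rpow (a + d) p <= - (Rpower 2 (p - 1) * rpow d p).
Proof.
  intros Hp Ha Hd.
  pose proof (rpow_superadditive a d p Hp Ha Hd).
  pose proof (Rpower_2_ge_1 p Hp).
  pose proof (rpow_nonneg a p). pose proof (rpow_nonneg d p). nra.
Qed.

Lemma Rabs_split_between v m y : (v - m) * (y - m) <= 0 ->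
  Rabs (v - y) = Rabs (v - m) + Rabs (y - m).
Proof.
  intros H. unfold Rabs.
  repeat destruct Rcase_abs; nra.
Qed.

Lemma agent_cost_gap p v m y : 1 <= p ->
  let c := rpow (Rabs (v - m)) p - Rpower 2 (p - 1) * rpow (Rabs (v - y)) p in
  let D := Rpower 2 (p - 1) * rpow (Rabs (y - m)) p in
  c <= D /\ ((v - m) * (y - m) <= 0 -> c <= - D).
Proof.
  intros Hp c D. split.
  - apply cost_gap_le; try apply Rabs_pos; auto.
    replace (v - m) with ((v - y) + (y - m)) by ring. apply Rabs_triang.
  - intros Hbetween. unfold c, D. rewrite (Rabs_split_between v m y Hbetween).
    apply cost_gap_le_opp; try apply Rabs_pos; auto.
Qed.

Fixpoint psum (c : nat -> R) (n : nat) : R :=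
  match n with O => 0 | S n' => psum c n' + c n' end.

Lemma sum_f_R0_psum c n : sum_f_R0 c n = psum c (S n).
Proof. induction n; simpl in *; [ring | rewrite IHn; ring]. Qed.

Lemma psum_sub_scal f g K n :
  psum (fun i => f i - K * g i) n = psum f n - K * psum g n.
Proof. induction n; simpl; [ring | rewrite IHn; ring]. Qed.

Lemma psum_nonneg c n : (forall i, 0 <= c i) -> 0 <= psum c n.
Proof. intros Hc; induction n; simpl; [lra | pose proof (Hc n); lra]. Qed.

Lemma psum_nonpos_of_minority (P : R -> bool) x c D n : 0 <= D ->
  (2 * count_idx P x n <= n)%nat ->
  (forall i, (i < n)%nat -> c i <= if P (x i) then D else - D) ->
  psum c n <= 0.
Proof.
  intros HD Hminor Hc.
  assert (Hbound : psum c n <= D * (2 * INR (count_idx P x n) - INR n)).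
  { clear Hminor; induction n as [| n IH]; cbn [psum count_idx].
    - simpl; lra.
    - specialize (IH (fun i Hi => Hc i ltac:(lia))).
      specialize (Hc n ltac:(lia)).
      rewrite plus_INR, S_INR.
      destruct (P (x n)); simpl in *; lra. }
  apply le_INR in Hminor. rewrite mult_INR in Hminor. simpl in Hminor. nra.
Qed.

Lemma count_idx_compl (P : R -> bool) x n :
  (count_idx (fun v => negb (P v)) x n + count_idx P x n = n)%nat.
Proof. induction n; simpl; [reflexivity | destruct (P (x n)); simpl; lia]. Qed.

Lemma median_balanced x n m : kth_largest x n ((n + 1) / 2)%nat m ->
  (2 * count_idx (fun v => Rgtb v m) x n <= n /\
   2 * count_idx (fun v => negb (Rgeb v m)) x n <= n)%nat.
Proof.
  intros [_ [Hgt Hge]].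
  set (k := ((n + 1) / 2)%nat) in *.
  assert (Hk_le : (2 * k <= n + 1)%nat) by (apply Nat.Div0.mul_div_le; lia).
  assert (Hk_ge : (n <= 2 * k)%nat).
  { pose proof (Nat.div_mod_eq (n + 1) 2).
    pose proof (Nat.mod_upper_bound (n + 1) 2 ltac:(lia)). lia. }
  pose proof (count_idx_compl (fun v => Rgeb v m) x n). lia.
Qed.

Lemma median_power_cost p x n m y : 1 <= p ->
  kth_largest x n ((n + 1) / 2)%nat m ->
  psum (fun i => rpow (Rabs (x i - m)) p) n
    <= Rpower 2 (p - 1) * psum (fun i => rpow (Rabs (x i - y)) p) n.
Proof.
  intros Hp Hmed.
  destruct (median_balanced x n m Hmed) as [Habove Hbelow].
  set (D := Rpower 2 (p - 1) * rpow (Rabs (y - m)) p).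
  assert (HD : 0 <= D).
  { pose proof (Rpower_2_ge_1 p Hp). pose proof (rpow_nonneg (Rabs (y - m)) p).
    unfold D; nra. }
  enough (Hgap : psum (fun i => rpow (Rabs (x i - m)) p
                          - Rpower 2 (p - 1) * rpow (Rabs (x i - y)) p) n <= 0)
    by (rewrite psum_sub_scal in Hgap; lra).
  destruct (Rle_lt_dec m y) as [Hmy | Hym].
  - (* only agents strictly above m can fail to see m on their way to y *)
    apply (psum_nonpos_of_minority (fun v => Rgtb v m) x _ D n HD Habove).
    intros i _. destruct (agent_cost_gap p (x i) m y Hp) as [Hle Hopp].
    unfold Rgtb. destruct (Rlt_dec m (x i)); [exact Hle |].
    apply Hopp; nra.
  - (* symmetrically, only agents strictly below m *)
    apply (psum_nonpos_of_minority (fun v => negb (Rgeb v m)) x _ D n HD Hbelow).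
    intros i _. destruct (agent_cost_gap p (x i) m y Hp) as [Hle Hopp].
    unfold Rgeb. destruct (Rle_dec m (x i)); simpl; [| exact Hle].
    apply Hopp; nra.
Qed.

Lemma root_of_scaled_le a b p : 1 <= p -> 0 <= a -> 0 <= b ->
  a <= Rpower 2 (p - 1) * b ->
  rpow a (1 / p) <= Rpower 2 (1 - 1 / p) * rpow b (1 / p).
Proof.
  intros Hp Ha Hb Hab.
  assert (Hinv : 0 < 1 / p) by (apply Rdiv_lt_0_compat; lra).
  eapply Rle_trans; [apply (rpow_le_compat a (Rpower 2 (p - 1) * b)); lra |].
  rewrite rpow_mult by (lra || (left; apply exp_pos)).
  rewrite rpow_pos by apply exp_pos.
  rewrite Rpower_mult. right. f_equal. f_equal. field. lra.
Qed.

Theorem mainTheorem3 (n : nat) (p : R) (x : nat -> R) (m : R) :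
  (2 <= n)%nat -> 1 <= p ->
  kth_largest x n ((n + 1) / 2)%nat m ->
  forall y : R, sc p x n m <= Rpower 2 (1 - 1 / p) * sc p x n y.
Proof.
  intros Hn Hp Hmed y. unfold sc.
  rewrite !sum_f_R0_psum. replace (S (n - 1)) with n by lia.
  apply root_of_scaled_le; auto using median_power_cost;
    apply psum_nonneg; intros; apply rpow_nonneg.
Qed.
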